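(* Let $c>0$ and consider the space of variables $(\rho,u,v,p,e,dx,dy)$, with $q^{2}=u^{2}+v^{2}<c^{2}$, where $dx,dy$ are treated as independent coordinates. Put $\Gamma=1/\sqrt{c^{2}-q^{2}}$ and $S=(e+p)\Gamma^{2}$. For a real parameter $\epsilon$ (where all expressions are defined) define $T_\epsilon:(\rho,u,v,p,e,dx,dy)\mapsto(\rho^{*},u^{*},v^{*},p^{*},e^{*},dx^{*},dy^{*})$ by \[ u^{*}=\frac{u}{\epsilon p+1},\quad v^{*}=\frac{v}{\epsilon p+1},\quad p^{*}=\frac{p}{\epsilon p+1},\quad \rho^{*}=\rho c\Gamma\sqrt{\tilde\Delta}\,\frac{\epsilon p+1}{\epsilon(p+Sq^{2})+1}, \] \[ e^{*}=\frac{c^{2}(\epsilon p+1)(e+p)\tilde\Delta}{(\epsilon p+1)(c^{2}-q^{2})+\epsilon(e+p)q^{2}}-\frac{p}{\epsilon p+1},\qquad \tilde\Delta=1-\frac{q^{2}}{c^{2}(\epsilon p+1)^{2}}, \] \[ dx^{*}=\epsilon\big((p+Sv^{2})\,dx-Suv\,dy\big)+dx,\qquad dy^{*}=\epsilon\big(-Suv\,dx+(p+Su^{2})\,dy\big)+dy. \] (This is the subclass, with $a_1=-\epsilon^{-1}$, $a_2=a_4=\epsilon^{-1}$, $a_3=1$ and after rescaling $x^*\to a_1x^*$, $y^*\to a_1y^*$, of reciprocal transformations leaving invariant the two-dimensional steady relativistic gasdynamic system $\partial_x(Ru)+\partial_y(Rv)=0$, $\partial_x(p+Su^2)+\partial_y(Suv)=0$,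 $\partial_x(Suv)+\partial_y(p+Sv^2)=0$, $\partial_x(Su)+\partial_y(Sv)=0$, $R=\rho\Gamma$.) Then $\{T_\epsilon\}$ is a one-parameter Lie group of transformations with infinitesimal generator \[ X=-\rho eq^{2}\Gamma^{2}\partial_{\rho}-pu\,\partial_{u}-pv\,\partial_{v}-p^{2}\partial_{p}+(c^{2}p^{2}-e^{2}q^{2})\Gamma^{2}\partial_{e} \] \[ +\Big(((c^{2}-u^{2})p+ev^{2})\,dx-uv(e+p)\,dy\Big)\Gamma^{2}\partial_{dx}+\Big(((c^{2}-v^{2})p+eu^{2})\,dy-uv(e+p)\,dx\Big)\Gamma^{2}\partial_{dy}, \] that is, with $q^{*2}=u^{*2}+v^{*2}$, the transformed quantities satisfy the Cauchy problem \[ \frac{d\rho^{*}}{d\epsilon}=-\frac{\rho^{*}e^{*}q^{*2}}{c^{2}-q^{*2}},\quad \frac{du^{*}}{d\epsilon}=-p^{*}u^{*},\quad \frac{dv^{*}}{d\epsilon}=-p^{*}v^{*},\quad \frac{dp^{*}}{d\epsilon}=-p^{*2},\quad \frac{de^{*}}{d\epsilon}=\frac{c^{2}p^{*2}-q^{*2}e^{*2}}{c^{2}-q^{*2}}, \] \[ \frac{d(dx^{*})}{d\epsilon}=\frac{((c^{2}-u^{*2})p^{*}+e^{*}v^{*2})dx^{*}-u^{*}v^{*}(e^{*}+p^{*})dy^{*}}{c^{2}-q^{*2}},\quad \frac{d(dy^{*})}{d\epsilon}=\frac{((c^{2}-v^{*2})p^{*}+e^{*}u^{*2})dy^{*}-u^{*}v^{*}(e^{*}+p^{*})dx^{*}}{c^{2}-q^{*2}},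 \] with initial data at $\epsilon=0$ equal to $(\rho,u,v,p,e,dx,dy)$.
   Context: $c$ is the speed of light; $\rho$, $(u,v)$, $p$, $e$ are density, velocity components, pressure and energy density. The differentials $dx,dy$ are regarded as additional coordinates acted on by the transformations. A one-parameter Lie group of transformations is a family $T_\epsilon$ with $T_0=\mathrm{id}$ and $T_{\epsilon_1}\circ T_{\epsilon_2}=T_{\epsilon_1+\epsilon_2}$; its infinitesimal generator is the vector field of $\epsilon$-derivatives at $\epsilon=0$. *)

From Stdlib Require Import Reals.
Open Scope R_scope.

Record state : Type := mkState {
  s_rho : R; s_u : R; s_v : R; s_p : R; s_e : R; s_dx : R; s_dy : R }.

Definition q2 (s : state) : R := s_u s ^ 2 + s_v s ^ 2.

Definition Gam (c : R) (s : state) : R := 1 / sqrt (c ^ 2 - q2 s).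

Definition Sfun (c : R) (s : state) : R := (s_e s + s_p s) * Gam c s ^ 2.

Definition Dtilde (c eps : R) (s : state) : R :=
  1 - q2 s / (c ^ 2 * (eps * s_p s + 1) ^ 2).

Definition Teps (c eps : R) (s : state) : state :=
  let rho := s_rho s in let u := s_u s in let v := s_v s in
  let p := s_p s in let e := s_e s in let dx := s_dx s in let dy := s_dy s in
  let q := q2 s in let S := Sfun c s in let a := eps * p + 1 in
  let D := Dtilde c eps s in
  mkState
    (rho * c * Gam c s * sqrt D * a / (eps * (p + S * q) + 1))
    (u / a)
    (v / a)
    (p / a)
    (c ^ 2 * a * (e + p) * D / (a * (c ^ 2 - q) + eps * (e + p) * q) - p / a)
    (eps * ((p + S * v ^ 2) * dx - S * u * v * dy) + dx)
    (eps * (- S * u * v * dx + (p + S * u ^ 2) * dy) + dy).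

Definition admissible (c : R) (s : state) : Prop := q2 s < c ^ 2.

(* "All expressions are defined" at parameter eps: the denominators are
   nonzero and the argument of the square root is positive. *)
Definition Teps_defined (c eps : R) (s : state) : Prop :=
  let p := s_p s in let e := s_e s in let q := q2 s in
  eps * p + 1 <> 0 /\
  0 < Dtilde c eps s /\
  eps * (p + Sfun c s * q) + 1 <> 0 /\
  (eps * p + 1) * (c ^ 2 - q) + eps * (e + p) * q <> 0.

(* Right-hand side of the Cauchy problem, i.e. the components of the
   infinitesimal generator X (with Gamma^2 = 1/(c^2 - q^2)). *)
Definition Xgen (c : R) (s : state) : state :=
  let rho := s_rho s in let u := s_u s in let v := s_v s in
  let p := s_p s in let e := s_e s in let dx := s_dx s in let dy := s_dy s in
  let q := q2 s in
  mkState
    (- (rho * e * q) / (c ^ 2 - q))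
    (- (p * u))
    (- (p * v))
    (- (p ^ 2))
    ((c ^ 2 * p ^ 2 - q * e ^ 2) / (c ^ 2 - q))
    ((((c ^ 2 - u ^ 2) * p + e * v ^ 2) * dx - u * v * (e + p) * dy) / (c ^ 2 - q))
    ((((c ^ 2 - v ^ 2) * p + e * u ^ 2) * dy - u * v * (e + p) * dx) / (c ^ 2 - q)).

From Stdlib Require Import Reals Lra Field.
From Coquelicot Require Import Coquelicot.
Open Scope R_scope.

(* With a = eps p + 1 and M_eps = a (c^2 - q^2) + eps (e + p) q^2, the image of s has
   q*^2 = q^2 / a^2, c^2 - q*^2 = c^2 Dtilde_eps, Gamma* = 1 / (c sqrt Dtilde_eps) and
   S* = a (e + p) / M_eps.  Moreover Dtilde_{e2}(T_{e1} s) = Dtilde_{e1+e2}(s) and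
   M_{e2}(T_{e1} s) = c^2 Dtilde_{e1} M_{e1+e2} / M_{e1}, so after substitution the group
   law becomes a family of rational identities.  The generator is obtained by
   differentiating the explicit formulas; only rho* involves a square root, handled by
   the product rule. *)

Ltac proj_simpl := cbn [s_rho s_u s_v s_p s_e s_dx s_dy] in *.

Ltac nonzero := repeat match goal with
  | |- _ /\ _ => split
  | |- True => exact I
  | |- _ ^ _ <> 0 => apply pow_nonzero
  | |- _ * _ <> 0 => apply Rmult_integral_contrapositive_currified
  | |- _ => assumption || lra
  end.

Lemma Sfun_eq c s : admissible c s -> Sfun c s = (s_e s + s_p s) / (c ^ 2 - q2 s).
Proof.
  intros hs; unfold admissible in hs; unfold Sfun, Gam, Rdiv.
  rewrite Rmult_1_l, pow_inv, pow2_sqrt by lra; reflexivity.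
Qed.

Lemma q2_Teps c eps s : eps * s_p s + 1 <> 0 ->
  q2 (Teps c eps s) = q2 s / (eps * s_p s + 1) ^ 2.
Proof. intros ha; unfold q2, Teps; proj_simpl; field; exact ha. Qed.

Lemma c2_minus_q2_Teps c eps s : c <> 0 -> eps * s_p s + 1 <> 0 ->
  c ^ 2 - q2 (Teps c eps s) = c ^ 2 * Dtilde c eps s.
Proof. intros hc ha; rewrite q2_Teps by exact ha; unfold Dtilde; field; auto. Qed.

Lemma Dtilde_Teps c e1 e2 s : c <> 0 -> e1 * s_p s + 1 <> 0 ->
  (e1 + e2) * s_p s + 1 <> 0 ->
  Dtilde c e2 (Teps c e1 s) = Dtilde c (e1 + e2) s.
Proof.
  intros hc ha1 ha12.
  unfold Dtilde at 1; rewrite q2_Teps by exact ha1.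
  unfold Dtilde, Teps; proj_simpl.
  replace (e2 * (s_p s / (e1 * s_p s + 1)) + 1)
    with (((e1 + e2) * s_p s + 1) / (e1 * s_p s + 1)) by (field; exact ha1).
  field; auto.
Qed.

Lemma admissible_Teps c eps s : 0 < c -> Teps_defined c eps s -> admissible c (Teps c eps s).
Proof.
  intros hc [ha [hD _]]; unfold admissible.
  enough (0 < c ^ 2 - q2 (Teps c eps s)) by lra.
  rewrite c2_minus_q2_Teps by (auto; lra).
  apply Rmult_lt_0_compat; [apply pow_lt|]; assumption.
Qed.

Lemma Gam_Teps c eps s : 0 < c -> Teps_defined c eps s ->
  Gam c (Teps c eps s) = / (c * sqrt (Dtilde c eps s)).
Proof.
  intros hc [ha [hD _]]; unfold Gam.
  rewrite c2_minus_q2_Teps, sqrt_mult, sqrt_pow2 by (auto using pow2_ge_0; lra).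
  field; split; [apply Rgt_not_eq, sqrt_lt_R0 | lra]; assumption.
Qed.

Lemma q2_lt_of_Dtilde_pos c eps s : c <> 0 -> eps * s_p s + 1 <> 0 ->
  0 < Dtilde c eps s -> q2 s < (c * (eps * s_p s + 1)) ^ 2.
Proof.
  intros hc ha hD.
  enough (0 < (c * (eps * s_p s + 1)) ^ 2 - q2 s) by lra.
  replace ((c * (eps * s_p s + 1)) ^ 2 - q2 s)
    with ((c * (eps * s_p s + 1)) ^ 2 * Dtilde c eps s) by (unfold Dtilde; field; auto).
  apply Rmult_lt_0_compat; [apply pow2_gt_0, Rmult_integral_contrapositive|]; auto.
Qed.

Definition Teps_den (c eps : R) (s : state) : R :=
  (eps * s_p s + 1) * (c ^ 2 - q2 s) + eps * (s_e s + s_p s) * q2 s.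

Lemma Teps_den_neq0 c eps s : Teps_defined c eps s -> Teps_den c eps s <> 0.
Proof. intros (_ & _ & _ & hM); exact hM. Qed.

Lemma rho_denominator_eq c eps s : admissible c s ->
  eps * (s_p s + Sfun c s * q2 s) + 1 = Teps_den c eps s / (c ^ 2 - q2 s).
Proof.
  intros hs; rewrite Sfun_eq by exact hs; unfold Teps_den, admissible in *.
  field; lra.
Qed.

Lemma Teps_explicit c eps s : admissible c s -> Teps_defined c eps s ->
  let a := eps * s_p s + 1 in
  Teps c eps s = mkState
    (s_rho s * c * Gam c s * sqrt (Dtilde c eps s) * a * (c ^ 2 - q2 s) / Teps_den c eps s)
    (s_u s / a) (s_v s / a) (s_p s / a)
    (c ^ 2 * a * (s_e s + s_p s) * Dtilde c eps s / Teps_den c eps s - s_p s / a)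
    (eps * ((s_p s + Sfun c s * s_v s ^ 2) * s_dx s
            - Sfun c s * s_u s * s_v s * s_dy s) + s_dx s)
    (eps * (- Sfun c s * s_u s * s_v s * s_dx s
            + (s_p s + Sfun c s * s_u s ^ 2) * s_dy s) + s_dy s).
Proof.
  intros hs hdef; pose proof (Teps_den_neq0 _ _ _ hdef); unfold Teps; cbv zeta.
  rewrite rho_denominator_eq by exact hs.
  f_equal; field; unfold admissible in hs; lra.
Qed.

Lemma Sfun_Teps c eps s : 0 < c -> Teps_defined c eps s ->
  Sfun c (Teps c eps s) = (eps * s_p s + 1) * (s_e s + s_p s) / Teps_den c eps s.
Proof.
  intros hc hdef; pose proof hdef as [ha [hD [_ hM]]].
  rewrite Sfun_eq, c2_minus_q2_Teps by (auto using admissible_Teps; lra).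
  unfold Teps; cbv zeta; proj_simpl; fold (Teps_den c eps s) in *.
  field; repeat split; auto; lra.
Qed.

Lemma Teps_den_Teps c e1 e2 s : 0 < c -> Teps_defined c e1 s ->
  Teps_den c e2 (Teps c e1 s) =
  c ^ 2 * Dtilde c e1 s * Teps_den c (e1 + e2) s / Teps_den c e1 s.
Proof.
  intros hc hdef; pose proof hdef as [ha [hD [_ hM]]].
  unfold Teps_den at 1; rewrite c2_minus_q2_Teps, q2_Teps by (auto; lra).
  unfold Teps; cbv zeta; proj_simpl; fold (Teps_den c e1 s) in *.
  unfold Dtilde, Teps_den in *.
  field; repeat split; auto; lra.
Qed.

Lemma Teps_0 c s : 0 < c -> admissible c s -> Teps c 0 s = s.
Proof.
  intros hc hs; unfold admissible in hs.
  assert (hD0 : Dtilde c 0 s = (c ^ 2 - q2 s) / c ^ 2) by (unfold Dtilde; field; lra).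
  assert (hr : 0 < sqrt (c ^ 2 - q2 s)) by (apply sqrt_lt_R0; lra).
  unfold Teps, Gam; cbv zeta; rewrite hD0, sqrt_div_alt, sqrt_pow2 by (auto using pow_lt; lra).
  destruct s; unfold q2 in *; proj_simpl; f_equal; field; lra.
Qed.

Lemma Teps_add c e1 e2 s : 0 < c -> admissible c s ->
  Teps_defined c e1 s -> Teps_defined c e2 (Teps c e1 s) ->
  Teps_defined c (e1 + e2) s ->
  Teps c e2 (Teps c e1 s) = Teps c (e1 + e2) s.
Proof.
  intros hc hs hdef1 hdef2 hdef12.
  pose proof hdef1 as [ha1 [hD1 [_ hM1]]].
  pose proof hdef12 as [ha12 [_ [_ hM12]]].
  assert (hr1 : 0 < sqrt (Dtilde c e1 s)) by (apply sqrt_lt_R0; exact hD1).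
  assert (hq1 := q2_lt_of_Dtilde_pos c e1 s ltac:(lra) ha1 hD1).
  rewrite (Teps_explicit c e2) by (auto using admissible_Teps).
  rewrite Gam_Teps, Dtilde_Teps, c2_minus_q2_Teps, Teps_den_Teps, Sfun_Teps by (auto; lra).
  rewrite Teps_explicit by auto; proj_simpl.
  rewrite Teps_explicit by auto.
  rewrite !(Sfun_eq c s) by exact hs.
  unfold admissible, Dtilde, Teps_den, q2 in *.
  f_equal; field; repeat split; auto; lra.
Qed.

Lemma Dtilde_derivative c eps s : c <> 0 -> eps * s_p s + 1 <> 0 ->
  is_derive (fun t => Dtilde c t s) eps
    (2 * q2 s * s_p s / (c ^ 2 * (eps * s_p s + 1) ^ 3)).
Proof.
  intros hc ha; unfold Dtilde; auto_derive; [nonzero | field; nonzero].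
Qed.

Section CauchyProblem.

Variables (c eps : R) (s : state).
Hypotheses (hc : 0 < c) (hs : admissible c s) (hdef : Teps_defined c eps s).

Lemma Teps_rho_derivative :
  derivable_pt_lim (fun t => s_rho (Teps c t s)) eps (s_rho (Xgen c (Teps c eps s))).
Proof.
  destruct hdef as (ha & hD & hX & hM).
  assert (hr : 0 < sqrt (Dtilde c eps s)) by (apply sqrt_lt_R0; exact hD).
  assert (hrr : sqrt (Dtilde c eps s) * sqrt (Dtilde c eps s) = Dtilde c eps s)
    by (apply sqrt_sqrt; lra).
  pose (k := s_rho s * c * Gam c s).
  pose (X t := t * (s_p s + Sfun c s * q2 s) + 1).
  pose (dD := 2 * q2 s * s_p s / (c ^ 2 * (eps * s_p s + 1) ^ 3)).
  apply is_derive_Reals.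
  replace (s_rho (Xgen c (Teps c eps s))) with
    (dD / (2 * sqrt (Dtilde c eps s)) * (k * (eps * s_p s + 1) / X eps)
     + sqrt (Dtilde c eps s) * (- k * Sfun c s * q2 s / X eps ^ 2)).
  - assert (hfactor : forall t,
        sqrt (Dtilde c t s) * (k * (t * s_p s + 1) / X t) = s_rho (Teps c t s)).
    { intros t; unfold Teps, k, X; cbv zeta; proj_simpl; unfold Rdiv; ring. }
    apply (is_derive_ext _ _ _ _ hfactor).
    apply (is_derive_mult (fun t => sqrt (Dtilde c t s)) (fun t => k * (t * s_p s + 1) / X t));
      [| | exact Rmult_comm].
    + apply is_derive_sqrt; [apply Dtilde_derivative|]; auto; lra.
    + unfold X; auto_derive; [exact hX | field; exact hX].
  - (* Field cannot use sqrt D * sqrt D = D, so trade the inverse square root for one. *)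
    replace (dD / (2 * sqrt (Dtilde c eps s)))
      with (dD * sqrt (Dtilde c eps s) / (2 * (sqrt (Dtilde c eps s) * sqrt (Dtilde c eps s))))
      by (field; lra).
    rewrite hrr.
    pose proof (q2_lt_of_Dtilde_pos c eps s ltac:(lra) ha hD).
    unfold Xgen, Teps, dD, k, X; cbv zeta; proj_simpl.
    rewrite !Sfun_eq in * by exact hs.
    unfold Dtilde, admissible, q2 in *; proj_simpl.
    field; nonzero.
Qed.

Ltac solve_Teps_derivative :=
  destruct hdef as (ha & hD & hX & hM);
  pose proof (q2_lt_of_Dtilde_pos c eps s ltac:(lra) ha hD);
  apply is_derive_Reals;
  unfold Xgen, Teps, Dtilde in *; cbv zeta in *; proj_simpl;
  rewrite !Sfun_eq in * by exact hs;
  unfold admissible, q2 in *; proj_simpl;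
  auto_derive; [nonzero | field; nonzero].

Lemma Teps_u_derivative :
  derivable_pt_lim (fun t => s_u (Teps c t s)) eps (s_u (Xgen c (Teps c eps s))).
Proof. solve_Teps_derivative. Qed.

Lemma Teps_v_derivative :
  derivable_pt_lim (fun t => s_v (Teps c t s)) eps (s_v (Xgen c (Teps c eps s))).
Proof. solve_Teps_derivative. Qed.

Lemma Teps_p_derivative :
  derivable_pt_lim (fun t => s_p (Teps c t s)) eps (s_p (Xgen c (Teps c eps s))).
Proof. solve_Teps_derivative. Qed.

Lemma Teps_e_derivative :
  derivable_pt_lim (fun t => s_e (Teps c t s)) eps (s_e (Xgen c (Teps c eps s))).
Proof. solve_Teps_derivative. Qed.

Lemma Teps_dx_derivative :
  derivable_pt_lim (fun t => s_dx (Teps c t s)) eps (s_dx (Xgen c (Teps c eps s))).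
Proof. solve_Teps_derivative. Qed.

Lemma Teps_dy_derivative :
  derivable_pt_lim (fun t => s_dy (Teps c t s)) eps (s_dy (Xgen c (Teps c eps s))).
Proof. solve_Teps_derivative. Qed.

End CauchyProblem.

Theorem mainTheorem3 (c : R) (hc : 0 < c) (s : state) (hs : admissible c s) :
  (* identity at eps = 0 *)
  Teps c 0 s = s /\
  (* group law, wherever all transformations involved are defined *)
  (forall e1 e2 : R,
     Teps_defined c e1 s -> Teps_defined c e2 (Teps c e1 s) ->
     Teps_defined c (e1 + e2) s ->
     Teps c e2 (Teps c e1 s) = Teps c (e1 + e2) s) /\
  (* Cauchy problem: d/deps T_eps(s) = X(T_eps(s)) *)
  (forall eps : R, Teps_defined c eps s ->
     derivable_pt_lim (fun t => s_rho (Teps c t s)) eps (s_rho (Xgen c (Teps c eps s))) /\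
     derivable_pt_lim (fun t => s_u (Teps c t s)) eps (s_u (Xgen c (Teps c eps s))) /\
     derivable_pt_lim (fun t => s_v (Teps c t s)) eps (s_v (Xgen c (Teps c eps s))) /\
     derivable_pt_lim (fun t => s_p (Teps c t s)) eps (s_p (Xgen c (Teps c eps s))) /\
     derivable_pt_lim (fun t => s_e (Teps c t s)) eps (s_e (Xgen c (Teps c eps s))) /\
     derivable_pt_lim (fun t => s_dx (Teps c t s)) eps (s_dx (Xgen c (Teps c eps s))) /\
     derivable_pt_lim (fun t => s_dy (Teps c t s)) eps (s_dy (Xgen c (Teps c eps s)))).
Proof.
  split; [exact (Teps_0 c s hc hs)|].
  split; [intros e1 e2; exact (Teps_add c e1 e2 s hc hs)|].
  intros eps hdef; repeat split.
  - exact (Teps_rho_derivative c eps s hc hs hdef).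
  - exact (Teps_u_derivative c eps s hc hs hdef).
  - exact (Teps_v_derivative c eps s hc hs hdef).
  - exact (Teps_p_derivative c eps s hc hs hdef).
  - exact (Teps_e_derivative c eps s hc hs hdef).
  - exact (Teps_dx_derivative c eps s hc hs hdef).
  - exact (Teps_dy_derivative c eps s hc hs hdef).
Qed.
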